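(* Each of $\Upsilon=\pi,\theta,\theta_B,\theta_{AB},\Psi$ satisfies the separation property on the class of all tree-child phylogenetic networks (labeled in a fixed finite set $S$) in which no pair of parents of a hybrid node is connected by a path: for any two such networks $N_1,N_2$, if $\Upsilon(N_1)=\Upsilon(N_2)$ then $N_1\cong N_2$.
   Context: A DAG $N=(V,E)$ is labeled in $S$ if its leaves (out-degree 0) are bijectively labeled by $S$; $\cong$ means isomorphism of directed graphs preserving leaf labels. A tree node has in-degree at most 1; a hybrid node has in-degree greater than 1; a tree child is a child that is a tree node. A tree-child phylogenetic network is a rooted DAG labeled in $S$ in which every non-leaf node has at least one tree child, no tree node has out-degree 1, and every hybrid node has out-degree exactly 1. ''No pair of parents of a hybrid node is connected by a path'': if $u_1,u_2$ are parents of a hybrid node, there is no path $u_1\rightsquigarrow u_2$ nor $u_2\rightsquigarrow u_1$. For a node $v$: $C(v)$ is the set of descendant leaves; $A(v)$ the set of leaves $s$ such that every path from the root to $s$ contains $v$; $B(v)=C(v)\setminus A(v)$. For an arc $e=(u,v)$: $\pi(e)=(C(v),S\setminus C(v))$; $\theta(e)=(A(v),B(v),S\setminus C(v))$; $\theta_B(e)$ is $\theta(e)$ with each $s\in B(v)$ weighted by the maximum number of hybrid nodes on a path from $v$ to $s$ (including $v$ and $s$); $\theta_{AB}(e)$ is $\theta(e)$ with each $s\in A(v)\cup B(v)$ so weighted. An arc is a tree arc if its head is a tree node and a network arc otherwise; for a hybrid node $v$, $RS(v)=\{C(u)\mid u\text{ a parent of }v\}$; $\Psi(e)=\theta_{AB}(e)$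 for a tree arc, $\Psi(e)=(\theta(e),RS(v))$ for a network arc with head $v$. For each $\Upsilon$, $\Upsilon(N)=\{\Upsilon(e)\mid e\in E\}$. *)

From HB Require Import structures.
From mathcomp Require Import all_boot.
From mathcomp Require Import boolp.

(* A finite directed graph (no multiple arcs) whose nodes are the finType nV,
   arcs given by nE, together with a labelling map nlab : S -> nV (intended to
   be a bijection between S and the leaves, see [labeled_in]). *)
Record network (S : finType) := Network {
  nV : finType;
  nE : rel nV;
  nlab : S -> nV }.

Arguments nV {S}.
Arguments nE {S}.
Arguments nlab {S}.
Set Implicit Arguments. Unset Strict Implicit. Unset Printing Implicit Defensive.

Section Defs.
Variable S : finType.
Variable N : network S.
Local Notation V := (nV N).
Local Notation E := (nE N).
Local Notation lab := (nlab N).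

Definition indeg (v : V) := #|[set u | E u v]|.
Definition outdeg (v : V) := #|[set w | E v w]|.
Definition is_leaf (v : V) := outdeg v == 0.
Definition is_tree_node (v : V) := indeg v <= 1.
Definition is_hybrid (v : V) := 1 < indeg v.

Definition acyclic := forall u v, E u v -> ~~ connect E v u.
Definition is_root (r : V) := indeg r == 0.
Definition rooted := exists r, is_root r /\ forall v, is_root v -> v = r.
Definition labeled_in := injective lab /\ forall v, is_leaf v <-> exists s, lab s = v.

Definition tree_child_network :=
  [/\ acyclic, rooted, labeled_in &
   [/\ (forall v, ~~ is_leaf v -> exists w, E v w && is_tree_node w),
      (forall v, is_tree_node v -> outdeg v != 1) &
      (forall v, is_hybrid v -> outdeg v = 1)]].

Definition no_parent_path :=
  forall h u1 u2, is_hybrid h -> E u1 h -> E u2 h -> u1 != u2 -> ~~ connect E u1 u2.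


Definition Cset (v : V) : {set S} := [set s | connect E v (lab s)].
Definition Aset (v : V) : {set S} :=
  [set s | `[< forall r (p : seq V), is_root r -> path E r p -> last r p = lab s ->
              v \in r :: p >] ].
Definition Bset (v : V) : {set S} := Cset v :\: Aset v.

Definition hyb_path (v w : V) (n : nat) :=
  exists p : seq V, [/\ path E v p, last v p = w & count is_hybrid (v :: p) = n].
(* maximum number of hybrid nodes on a path from v to w; in an acyclic graph
   every path visits at most #|V| nodes, so the bound n <= #|V| is no restriction *)
Definition max_hyb (v w : V) : nat :=
  \max_(n < #|V|.+1 | `[< hyb_path v w n >]) n.

(* a weighted subset of S: Some w at s in the set (weight w), None elsewhere *)
Definition weighted (v : V) (X : {set S}) : {ffun S -> option nat} :=
  [ffun s => if s \in X then Some (max_hyb v (lab s)) else None].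

Definition pi_arc (u v : V) : {set S} * {set S} := (Cset v, ~: Cset v).
Definition theta_arc (u v : V) : {set S} * {set S} * {set S} :=
  (Aset v, Bset v, ~: Cset v).
Definition thetaB_arc (u v : V) : {set S} * {ffun S -> option nat} * {set S} :=
  (Aset v, weighted v (Bset v), ~: Cset v).
Definition thetaAB_arc (u v : V)
  : {ffun S -> option nat} * {ffun S -> option nat} * {set S} :=
  (weighted v (Aset v), weighted v (Bset v), ~: Cset v).
Definition RS (v : V) : {set {set S}} := [set Cset u | u in [set u | E u v]].
Definition Psi_arc (u v : V)
  : ({ffun S -> option nat} * {ffun S -> option nat} * {set S})
    + ({set S} * {set S} * {set S} * {set {set S}}) :=
  if is_tree_node v then inl (thetaAB_arc u v) else inr (theta_arc u v, RS v).

End Defs.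

Definition net_iso (S : finType) (N1 N2 : network S) :=
  exists f : nV N1 -> nV N2,
    [/\ bijective f, (forall u v, nE N1 u v = nE N2 (f u) (f v)) &
        (forall s, f (nlab N1 s) = nlab N2 s)].

(* Upsilon(N) = { Upsilon(e) | e in E } as a predicate; x \in Upsilon(N) *)
Definition arc_image (S : finType) (T : Type)
  (Y : forall N : network S, nV N -> nV N -> T) (N : network S) (x : T) :=
  exists u v, nE N u v /\ Y N u v = x.

Definition separates (S : finType) (P : network S -> Prop) (T : Type)
  (Y : forall N : network S, nV N -> nV N -> T) :=
  forall N1 N2 : network S, P N1 -> P N2 ->
    (forall x, arc_image Y N1 x <-> arc_image Y N2 x) -> net_iso N1 N2.

Definition TCN_no_parent_path (S : finType) (N : network S) :=
  tree_child_network N /\ no_parent_path N.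

From mathcomp Require Import all_boot.
Set Implicit Arguments. Unset Strict Implicit. Unset Printing Implicit Defensive.

(* In a tree-child network in which no two parents of a hybrid node are
   joined by a path, the cluster map C is injective on tree nodes, and a
   hybrid node has the cluster of its unique child, which is a tree node.
   For a tree node v, the clusters covering C(v) in the set of all clusters
   are those of its tree parent, or of the parents of its hybrid parent; so v
   has a hybrid parent iff C(v) has at least two covers.  Hence a node v is
   determined by the code (C(v), v is hybrid), the possible codes and the arcs
   between them are read off the set of clusters, and the network is
   determined up to isomorphism by its clusters.  Every representation
   Upsilon(e) of an arc e contains the complement of the cluster of its head,
   and these clusters together with S are all the clusters. *)

Section ConnectEdges.
Variables (T : finType) (e : rel T).

Lemma connect_last_edge x y :
  connect e x y -> x != y -> exists2 q, e q y & connect e x q.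
Proof.
move=> /connectP [p pth ->]; elim/last_ind: p pth => [|p z _] /=.
  by rewrite eqxx.
rewrite rcons_path last_rcons => /andP [pth ez] _.
by exists (last x p) => //; apply/connectP; exists p.
Qed.

Lemma connect_first_edge x y :
  connect e x y -> x != y -> exists2 z, e x z & connect e z y.
Proof.
move=> /connectP [[|z p] /= pth ->]; first by rewrite eqxx.
by move: pth => /andP [exz pth] _; exists z => //; apply/connectP; exists p.
Qed.

Hypothesis e_acyclic : forall u v, e u v -> ~~ connect e v u.

Lemma acyclic_succ_ind (P : T -> Prop) :
  (forall x, (forall y, e x y -> P y) -> P x) -> forall x, P x.
Proof.
move=> IH x; have [n] := ubnP #|[set y | connect e x y]|.
elim: n x => // n IHn x lt_x_n; apply: IH => y exy; apply: IHn.
apply: leq_trans _ (ltnSE lt_x_n); apply: proper_card; apply/properP; split.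
  by apply/subsetP => z; rewrite !inE; apply: connect_trans (connect1 exy).
by exists x; rewrite !inE ?connect0 ?e_acyclic.
Qed.

End ConnectEdges.

Lemma acyclic_pred_ind (T : finType) (e : rel T) :
  (forall u v, e u v -> ~~ connect e v u) ->
  forall P : T -> Prop, (forall y, (forall x, e x y -> P x) -> P y) -> forall y, P y.
Proof.
move=> e_acyclic; apply: (@acyclic_succ_ind _ [rel x y | e y x]) => u v /= evu.
by rewrite connect_rev /= e_acyclic.
Qed.

Definition clusters (S : finType) (N : network S) : {set {set S}} :=
  [set Cset v | v : nV N].

Definition arc_clusters (S : finType) (N : network S) : {set {set S}} :=
  [set Cset v | v : nV N & [exists u, nE N u v]].

Definition covers (S : finType) (K : {set {set S}}) (X Y : {set S}) : bool :=
  [&& Y \in K, X \proper Y & [forall Z in K, ~~ ((X \proper Z) && (Z \proper Y))]].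

Definition multi_covered (S : finType) (K : {set {set S}}) (X : {set S}) :=
  1 < #|[set Y | covers K X Y]|.

Definition node_code (S : finType) (N : network S) (v : nV N) :=
  (Cset v, is_hybrid v).

Definition valid_code (S : finType) (K : {set {set S}}) (x : {set S} * bool) :=
  (x.1 \in K) && (x.2 ==> multi_covered K x.1).

Definition code_rel (S : finType) (K : {set {set S}}) (x y : {set S} * bool) :=
  if x.2 then ~~ y.2 && (x.1 == y.1)
  else covers K y.1 x.1 && (y.2 == multi_covered K y.1).

Section TreeChildNetwork.
Variables (S : finType) (N : network S).
Local Notation V := (nV N).
Local Notation E := (nE N).
Local Notation lab := (nlab N).
Local Notation K := (clusters N).
Implicit Types (u v w h p q t c r : V) (s : S).
Hypothesis tcn : tree_child_network N.
Hypothesis npp : no_parent_path N.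

Let acyc : acyclic N. Proof. by case: tcn => ? _ _ _. Qed.
Let root_uniq : rooted N. Proof. by case: tcn => _ ? _ _. Qed.
Let labin : labeled_in N. Proof. by case: tcn => _ _ ? _. Qed.
Let tree_child v : ~~ is_leaf v -> exists w, E v w && is_tree_node w.
Proof. by case: tcn => _ _ _ [tc _ _]; apply: tc. Qed.
Let tree_outdeg v : is_tree_node v -> outdeg v != 1.
Proof. by case: tcn => _ _ _ [_ tout _]; apply: tout. Qed.
Let hybrid_outdeg v : is_hybrid v -> outdeg v = 1.
Proof. by case: tcn => _ _ _ [_ _ hout]; apply: hout. Qed.

Lemma tree_nodeNhybrid v : is_tree_node v = ~~ is_hybrid v.
Proof. by rewrite /is_tree_node /is_hybrid -leqNgt. Qed.

Lemma tree_parent_uniq v p q : is_tree_node v -> E p v -> E q v -> p = q.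
Proof. by move=> /card_le1_eqP tv pv qv; apply: tv; rewrite inE. Qed.

Lemma hybrid_of_parents v p q : E p v -> E q v -> p != q -> is_hybrid v.
Proof. by move=> pv qv pq; apply/card_gt1P; exists p, q; rewrite !inE pv qv. Qed.

Lemma leafNarc v w : is_leaf v -> ~~ E v w.
Proof.
move=> /eqP/cards0_eq v0; apply/negP => vw.
by move: (in_set0 w); rewrite -v0 inE vw.
Qed.

Lemma arc_nonleaf u v : E u v -> ~~ is_leaf u.
Proof. by move=> uv; apply: contraL uv; apply: leafNarc. Qed.

Lemma hybrid_child h :
  is_hybrid h -> exists t, [/\ E h t, is_tree_node t & forall w, E h w -> w = t].
Proof.
move=> hh; have o1 := hybrid_outdeg hh.
have [t /andP [ht tt]] : exists t, E h t && is_tree_node t.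
  by apply: tree_child; rewrite /is_leaf o1.
exists t; split=> // w hw.
have : #|[set w | E h w]| <= 1 by rewrite -/(outdeg h) o1.
by move/card_le1_eqP; apply; rewrite inE.
Qed.

Lemma hybrid_parent_tree p h : is_hybrid h -> E p h -> is_tree_node p.
Proof.
move=> hh ph; rewrite tree_nodeNhybrid; apply/negP => hp.
have [t [_ tt t_uniq]] := hybrid_child hp.
by move: tt; rewrite -(t_uniq h ph) tree_nodeNhybrid hh.
Qed.

Lemma tree_sibling u v : is_tree_node u -> E u v -> exists2 c, E u c & c != v.
Proof.
move=> tu uv; have : 1 < outdeg u.
  by move: (tree_outdeg tu) (arc_nonleaf uv); rewrite /is_leaf; case: (outdeg u) => [|[]].
move=> /card_gt1P [x [y []]]; rewrite !inE => ux uy xy.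
have [xv|] := eqVneq x v; last by exists x.
by exists y; rewrite // eq_sym -xv.
Qed.

Lemma siblingNconnect u v c : E u v -> E u c -> v != c -> ~~ connect E v c.
Proof.
move=> uv uc vc; apply/negP => cvc.
have [q qc cvq] := connect_last_edge cvc vc.
have uq : u != q by apply: contraTneq cvq => <-; apply: acyc uv.
have := npp (hybrid_of_parents uc qc uq) uc qc uq.
by rewrite (connect_trans (connect1 uv) cvq).
Qed.

Lemma lab_leaf s : is_leaf (lab s).
Proof. by apply/(labin.2 (lab s)); exists s. Qed.

Lemma lab_hybridF s : is_hybrid (lab s) = false.
Proof. by apply/negP => /hybrid_outdeg o1; move: (lab_leaf s); rewrite /is_leaf o1. Qed.

Lemma connect_leaf v w : is_leaf v -> connect E v w -> w = v.
Proof.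
move=> lv cvw; have [<-|nvw] := eqVneq v w; first by [].
have [z vz _] := connect_first_edge cvw nvw.
by move: (leafNarc z lv); rewrite vz.
Qed.

Lemma Cset_lab s : Cset (lab s) = [set s].
Proof.
apply/setP => s'; rewrite !inE; apply/idP/eqP => [|->]; last exact: connect0.
by move/(connect_leaf (lab_leaf s)); apply: labin.1.
Qed.

Lemma Cset_sub_connect u v : connect E u v -> Cset v \subset Cset u.
Proof. by move=> cuv; apply/subsetP => s; rewrite !inE; apply: connect_trans cuv. Qed.

Lemma Cset_hybrid h t : is_hybrid h -> E h t -> Cset h = Cset t.
Proof.
move=> hh ht; apply/eqP; rewrite eqEsubset (Cset_sub_connect (connect1 ht)) andbT.
have [t' [_ _ t'_uniq]] := hybrid_child hh.
apply/subsetP => s; rewrite !inE => chs.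
have [hs|nhs] := eqVneq h (lab s); first by move: hh; rewrite hs lab_hybridF.
have [z hz czs] := connect_first_edge chs nhs.
by rewrite (t'_uniq _ ht) -(t'_uniq _ hz).
Qed.

(* Follow tree children down to a leaf: a tree node has a single parent, so
   every ancestor of that leaf lies on the tree path or above it. *)
Lemma strict_leaf v : exists s, connect E v (lab s) /\
  forall w, connect E w (lab s) -> connect E w v || connect E v w.
Proof.
move: v; apply: (acyclic_succ_ind acyc) => v IH.
have [lv|nlv] := boolP (is_leaf v).
  have [s <-] := (labin.2 v).1 lv.
  by exists s; split=> [|w ->] //; apply: connect0.
have [t /andP [vt tt]] := tree_child nlv.
have [s [cts Hs]] := IH t vt.
exists s; split=> [|w cws]; first exact: connect_trans (connect1 vt) cts.
case/orP: (Hs w cws) => [cwt|ctw]; last by rewrite (connect_trans (connect1 vt) ctw) orbT.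
have [->|nwt] := eqVneq w t; first by rewrite (connect1 vt) orbT.
have [q qt cwq] := connect_last_edge cwt nwt.
by rewrite -(tree_parent_uniq tt qt vt) cwq.
Qed.

Lemma connect_Cset_sub u w : Cset u \subset Cset w -> connect E w u || connect E u w.
Proof.
move=> /subsetP uw; have [s [cus Hs]] := strict_leaf u.
by apply: Hs; have := uw s; rewrite !inE; apply.
Qed.

Lemma Cset_child_proper u v : is_tree_node u -> E u v -> Cset v \proper Cset u.
Proof.
move=> tu uv; have [c uc cv] := tree_sibling tu uv.
have [s [ccs Hs]] := strict_leaf c.
rewrite properE (Cset_sub_connect (connect1 uv)) /=; apply/subsetPn; exists s.
  by rewrite inE (connect_trans (connect1 uc) ccs).
rewrite inE; apply/negP => /Hs /orP [].
- by apply/negP; apply: siblingNconnect uv uc _; rewrite eq_sym.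
- by apply/negP; apply: siblingNconnect uc uv cv.
Qed.

Lemma Cset_proper u v :
  is_tree_node u -> connect E u v -> u != v -> Cset v \proper Cset u.
Proof.
move=> tu cuv nuv; have [q qv cuq] := connect_last_edge cuv nuv.
have [hq|] := boolP (is_hybrid q); last first.
  rewrite -tree_nodeNhybrid => tq.
  exact: proper_sub_trans (Cset_child_proper tq qv) (Cset_sub_connect cuq).
have nuq : u != q by apply: contraTneq tu => ->; rewrite tree_nodeNhybrid hq.
have [p pq cup] := connect_last_edge cuq nuq.
apply: proper_sub_trans (Cset_sub_connect cup).
by rewrite -(Cset_hybrid hq qv); apply: Cset_child_proper (hybrid_parent_tree hq pq) pq.
Qed.

Lemma Cset_proper_connect v w : Cset v \proper Cset w -> connect E w v /\ w != v.
Proof.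
move=> vw; split; last by apply: contraTneq vw => ->; rewrite properxx.
case/orP: (connect_Cset_sub (proper_sub vw)) => // cvw.
by move: (proper_subn vw); rewrite Cset_sub_connect.
Qed.

Lemma Cset_inj_tree u v :
  is_tree_node u -> is_tree_node v -> Cset u = Cset v -> u = v.
Proof.
move=> tu tv Cuv; have [//|nuv] := eqVneq u v.
have nvu : v != u by rewrite eq_sym.
have /connect_Cset_sub/orP [cvu|cuv] : Cset u \subset Cset v by rewrite Cuv.
- by move: (Cset_proper tv cvu nvu); rewrite Cuv properxx.
- by move: (Cset_proper tu cuv nuv); rewrite Cuv properxx.
Qed.

Lemma Cset_inj_hybrid u v : is_hybrid u -> is_hybrid v -> Cset u = Cset v -> u = v.
Proof.
move=> hu hv Cuv; have [t [ut tt _]] := hybrid_child hu.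
have [t' [vt' tt' _]] := hybrid_child hv.
have tt'E : t = t'.
  by apply: Cset_inj_tree => //; rewrite -(Cset_hybrid hu ut) -(Cset_hybrid hv vt').
by apply: (tree_parent_uniq tt ut); rewrite tt'E.
Qed.

Lemma Cset_tree v : exists2 t : V, is_tree_node t & Cset t = Cset v.
Proof.
have [hv|] := boolP (is_hybrid v); last by exists v; rewrite // tree_nodeNhybrid.
by have [t [vt tt _]] := hybrid_child hv; exists t; rewrite // (Cset_hybrid hv vt).
Qed.

Lemma Cset_in_clusters v : Cset v \in K.
Proof. by apply/imsetP; exists v. Qed.

Lemma clusters_tree X : X \in K -> exists2 t : V, is_tree_node t & Cset t = X.
Proof. by case/imsetP => v _ ->; apply: Cset_tree. Qed.

(* The tree nodes just above v, skipping a hybrid parent of v; their clusters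
   are the covers of C(v). *)
Definition cover_parent (v p : V) :=
  (E p v /\ is_tree_node p) \/ exists h, [/\ E h v, is_hybrid h & E p h].

Lemma cover_parent_tree v p : cover_parent v p -> is_tree_node p.
Proof. by case=> [[]|[h [_ hh ph]]] //; apply: hybrid_parent_tree hh ph. Qed.

Lemma Cset_cover_parent_proper v p : cover_parent v p -> Cset v \proper Cset p.
Proof.
case=> [[pv tp]|[h [hv hh ph]]]; first exact: Cset_child_proper.
by rewrite -(Cset_hybrid hh hv); apply: Cset_child_proper (hybrid_parent_tree hh ph) ph.
Qed.

Lemma connect_cover_parent v w :
  is_tree_node w -> connect E w v -> w != v -> exists2 p, cover_parent v p & connect E w p.
Proof.
move=> tw cwv nwv; have [q qv cwq] := connect_last_edge cwv nwv.
have [hq|] := boolP (is_hybrid q); last first.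
  by rewrite -tree_nodeNhybrid => tq; exists q => //; left.
have nwq : w != q by apply: contraTneq tw => ->; rewrite tree_nodeNhybrid hq.
have [p pq cwp] := connect_last_edge cwq nwq.
by exists p => //; right; exists q.
Qed.

Lemma cover_parent_common v p (p' : V) : is_tree_node v ->
  cover_parent v p -> cover_parent v p' -> p != p' -> exists h, [/\ E h v, E p h & E p' h].
Proof.
move=> tv [[pv tp]|[h [hv hh ph]]] [[p'v tp']|[h' [h'v hh' p'h']]] np.
- by move: np; rewrite (tree_parent_uniq tv pv p'v) eqxx.
- by move: tp; rewrite (tree_parent_uniq tv pv h'v) tree_nodeNhybrid hh'.
- by move: tp'; rewrite (tree_parent_uniq tv p'v hv) tree_nodeNhybrid hh.
- by exists h; split; rewrite // (tree_parent_uniq tv hv h'v).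
Qed.

Lemma cover_parentsNconnect v p (p' : V) : is_tree_node v ->
  cover_parent v p -> cover_parent v p' -> p != p' -> ~~ connect E p p'.
Proof.
move=> tv vp vp' np; have [h [_ ph p'h]] := cover_parent_common tv vp vp' np.
exact: npp (hybrid_of_parents ph p'h np) ph p'h np.
Qed.

Lemma covers_cover_parent v Y :
  covers K (Cset v) Y -> exists2 p, cover_parent v p & Y = Cset p.
Proof.
case/and3P => /clusters_tree [w tw <-] vw /forall_inP minY.
have [cwv nwv] := Cset_proper_connect vw.
have [p vp cwp] := connect_cover_parent tw cwv nwv.
exists p => //; apply/esym/eqP; rewrite eqEproper (Cset_sub_connect cwp) /=.
apply: contraNN (minY _ (Cset_in_clusters p)) => pw.
by rewrite pw andbT Cset_cover_parent_proper.
Qed.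

Lemma cover_parent_covers v p :
  is_tree_node v -> cover_parent v p -> covers K (Cset v) (Cset p).
Proof.
move=> tv vp; rewrite /covers Cset_in_clusters Cset_cover_parent_proper //=.
apply/forall_inP => _ /clusters_tree [w tw <-]; apply/negP => /andP [vw wp].
have [cwv nwv] := Cset_proper_connect vw.
have [p' vp' cwp'] := connect_cover_parent tw cwv nwv.
have [p'p|np] := eqVneq p' p.
  by move: (proper_subn wp); rewrite -p'p Cset_sub_connect.
have np' : p != p' by rewrite eq_sym.
have /connect_Cset_sub/orP [] := subset_trans (Cset_sub_connect cwp') (proper_sub wp).
- by apply/negP; apply: cover_parentsNconnect tv vp vp' np'.
- by apply/negP; apply: cover_parentsNconnect tv vp' vp np.
Qed.

Lemma coversP u t : is_tree_node u -> is_tree_node t ->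
  reflect (cover_parent t u) (covers K (Cset t) (Cset u)).
Proof.
move=> tu tt; apply: (iffP idP); last exact: cover_parent_covers.
by case/covers_cover_parent => p cp /(Cset_inj_tree tu (cover_parent_tree cp)) ->.
Qed.

Lemma multi_coveredP v : is_tree_node v ->
  reflect (exists2 h, E h v & is_hybrid h) (multi_covered K (Cset v)).
Proof.
move=> tv; apply: (iffP card_gt1P) => [[Y1 [Y2 []]]|[h hv hh]].
  rewrite !inE => /covers_cover_parent [p vp ->] /covers_cover_parent [p' vp' ->] ne.
  have np : p != p' by apply: contraNneq ne => ->.
  have [h [hv ph p'h]] := cover_parent_common tv vp vp' np.
  by exists h; last exact: hybrid_of_parents ph p'h np.
have := hh; rewrite /is_hybrid /indeg => /card_gt1P [p [p' []]].
rewrite !inE => ph p'h np.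
have tp := hybrid_parent_tree hh ph; have tp' := hybrid_parent_tree hh p'h.
exists (Cset p), (Cset p'); rewrite !inE; split.
- by apply: cover_parent_covers tv _; right; exists h.
- by apply: cover_parent_covers tv _; right; exists h.
- by apply: contra np => /eqP /(Cset_inj_tree tp tp') ->.
Qed.

Lemma arc_from_hybrid u v : is_hybrid u -> E u v = ~~ is_hybrid v && (Cset u == Cset v).
Proof.
move=> hu; have [t [ut tt t_uniq]] := hybrid_child hu.
apply/idP/andP => [uv|[hv /eqP Cuv]].
  by rewrite (t_uniq v uv) -tree_nodeNhybrid (Cset_hybrid hu ut) eqxx.
have tv : is_tree_node v by rewrite tree_nodeNhybrid.
suff <- : t = v by [].
by apply: Cset_inj_tree tt tv _; rewrite -(Cset_hybrid hu ut).
Qed.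

Lemma arc_from_tree u v : is_tree_node u ->
  E u v = covers K (Cset v) (Cset u) && (is_hybrid v == multi_covered K (Cset v)).
Proof.
move=> tu; have [hv|] /= := boolP (is_hybrid v).
  have [t [vt tt _]] := hybrid_child hv.
  rewrite (Cset_hybrid hv vt); apply/idP/andP => [uv|[/(coversP tu tt) ut _]].
    split; first by apply/(coversP tu tt); right; exists v.
    by apply/(multi_coveredP tt); exists v.
  case: ut => [[ut _]|[h [ht _ uh]]].
    by move: tu; rewrite (tree_parent_uniq tt ut vt) tree_nodeNhybrid hv.
  by rewrite -(tree_parent_uniq tt ht vt).
rewrite -tree_nodeNhybrid => tv.
apply/idP/andP => [uv|[/(coversP tu tv) [[uv _] //|[h [hv hh _]]] /negP []]].
  split; first by apply/(coversP tu tv); left.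
  apply/negP => /(multi_coveredP tv) [h hv hh].
  by move: tu; rewrite -(tree_parent_uniq tv hv uv) tree_nodeNhybrid hh.
by apply/(multi_coveredP tv); exists h.
Qed.

Lemma arc_code u v : E u v = code_rel K (node_code u) (node_code v).
Proof.
rewrite /code_rel /node_code /=; have [hu|] := boolP (is_hybrid u).
  exact: arc_from_hybrid.
by rewrite -tree_nodeNhybrid; apply: arc_from_tree.
Qed.

Lemma node_code_inj : injective (@node_code S N).
Proof.
move=> u v [Cuv huv]; have [hu|] := boolP (is_hybrid u).
  by apply: Cset_inj_hybrid Cuv; rewrite // -huv.
by move=> nhu; apply: Cset_inj_tree Cuv; rewrite tree_nodeNhybrid // -huv.
Qed.

Lemma node_code_image x : (exists v, node_code v = x) <-> valid_code K x.
Proof.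
split=> [[v <-]|].
  rewrite /valid_code /= Cset_in_clusters /=; apply/implyP => hv.
  have [t [vt tt _]] := hybrid_child hv.
  by rewrite (Cset_hybrid hv vt); apply/(multi_coveredP tt); exists v.
case: x => X [] /andP /= [/clusters_tree [t tt <-]].
  by case/(multi_coveredP tt) => h ht hh; exists h; rewrite /node_code (Cset_hybrid hh ht) hh.
by exists t; move: tt; rewrite /node_code tree_nodeNhybrid => /negbTE ->.
Qed.

Lemma node_code_lab s : node_code (lab s) = ([set s], false).
Proof. by rewrite /node_code Cset_lab lab_hybridF. Qed.

Lemma reach_root v : exists2 r, is_root r & connect E r v.
Proof.
move: v; apply: (acyclic_pred_ind acyc) => v IH.
have [rv|nrv] := boolP (is_root v); first by exists v; rewrite ?connect0.
have /set0Pn [u] : [set u | E u v] != set0 by rewrite -cards_eq0.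
rewrite inE => uv; have [r rr cru] := IH u uv.
by exists r => //; apply: connect_trans cru (connect1 uv).
Qed.

Lemma Cset_root r : is_root r -> Cset r = setT.
Proof.
move=> rr; apply/setP => s; rewrite !inE.
have [r' rr' cr's] := reach_root (lab s).
by have [r0 [_ r0_uniq]] := root_uniq; rewrite (r0_uniq _ rr) -(r0_uniq _ rr').
Qed.

Lemma clusters_arcs : K = setT |: arc_clusters N.
Proof.
apply/setP => X; rewrite !inE.
apply/imsetP/orP => [[v _ ->]|[/eqP ->|/imsetP [v _ ->]]] //.
- have [rv|nrv] := boolP (is_root v); first by left; rewrite Cset_root.
  right; apply/imsetP; exists v => //; rewrite inE; apply/existsP.
  have /set0Pn [u] : [set u | E u v] != set0 by rewrite -cards_eq0.
  by rewrite inE; exists u.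
- by have [r [rr _]] := root_uniq; exists r; rewrite ?Cset_root.
- by exists v.
Qed.

End TreeChildNetwork.

Lemma bij_of_codes (A B : finType) (C : eqType) (f : A -> C) (g : B -> C)
  (P : C -> Prop) : injective f -> injective g ->
  (forall c, (exists a, f a = c) <-> P c) -> (forall c, (exists b, g b = c) <-> P c) ->
  exists2 h : A -> B, bijective h & forall a, g (h a) = f a.
Proof.
move=> finj ginj fP gP.
have gf a : exists b, g b == f a.
  by have [b gb] := (gP _).2 ((fP _).1 (ex_intro _ a erefl)); exists b; rewrite gb.
have fg b : exists a, f a == g b.
  by have [a fa] := (fP _).2 ((gP _).1 (ex_intro _ b erefl)); exists a; rewrite fa.
exists (fun a => xchoose (gf a)) => [|a]; last exact/eqP/(xchooseP (gf a)).
exists (fun b => xchoose (fg b)) => [a|b].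
  by apply: finj; rewrite (eqP (xchooseP (fg _))); apply/eqP/(xchooseP (gf a)).
by apply: ginj; rewrite (eqP (xchooseP (gf _))); apply/eqP/(xchooseP (fg b)).
Qed.

Theorem net_iso_of_clusters (S : finType) (N1 N2 : network S) :
  TCN_no_parent_path N1 -> TCN_no_parent_path N2 ->
  clusters N1 = clusters N2 -> net_iso N1 N2.
Proof.
move=> [t1 n1] [t2 n2] eK.
have im1 := node_code_image t1 n1; rewrite eK in im1.
have [h hbij hcode] := bij_of_codes (node_code_inj t1 n1) (node_code_inj t2 n2)
  im1 (node_code_image t2 n2).
exists h; split=> // [u v|s].
  by rewrite (arc_code t1 n1) (arc_code t2 n2) !hcode eK.
by apply: (node_code_inj t2 n2); rewrite hcode !node_code_lab.
Qed.

Section HeadClusters.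
Variables (S : finType) (T : Type) (Y : forall N : network S, nV N -> nV N -> T).
Variable g : T -> {set S}.
Hypothesis gY : forall (N : network S) (u v : nV N), g (Y u v) = ~: Cset v.

Lemma arc_clustersE (N : network S) X :
  X \in arc_clusters N <-> exists2 x, arc_image Y N x & X = ~: g x.
Proof.
split=> [/imsetP [v] | [_ [u [v [uv <-]]] ->]].
  by rewrite inE => /existsP [u uv] ->; exists (Y u v); [exists u, v | rewrite gY setCK].
by rewrite gY setCK; apply/imsetP; exists v; rewrite // inE; apply/existsP; exists u.
Qed.

Lemma arc_clusters_sub (N N' : network S) :
  (forall x, arc_image Y N x -> arc_image Y N' x) -> arc_clusters N \subset arc_clusters N'.
Proof.
move=> NN'; apply/subsetP => X /arc_clustersE [x /NN' x' ->].
by apply/arc_clustersE; exists x.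
Qed.

Lemma separates_of_head_clusters : separates (@TCN_no_parent_path S) Y.
Proof.
move=> N1 N2 [t1 n1] [t2 n2] eY; apply: net_iso_of_clusters => //.
rewrite (clusters_arcs t1) (clusters_arcs t2); congr (_ |: _).
by apply/eqP; rewrite eqEsubset !arc_clusters_sub // => x /eY.
Qed.

End HeadClusters.

Unset Implicit Arguments.

Theorem corollary9 (S : finType) :
  [/\ separates (@TCN_no_parent_path S) (@pi_arc S),
      separates (@TCN_no_parent_path S) (@theta_arc S),
      separates (@TCN_no_parent_path S) (@thetaB_arc S),
      separates (@TCN_no_parent_path S) (@thetaAB_arc S) &
      separates (@TCN_no_parent_path S) (@Psi_arc S)].
Proof.
split; try by apply: (@separates_of_head_clusters _ _ _ snd).
apply: (@separates_of_head_clusters _ _ _ (fun x => match x with inl y => y.2 | inr y => y.1.2 end)).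
by move=> N u v; rewrite /Psi_arc; case: ifP.
Qed.
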